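(* For every $P \in S$ of degree (in $x$) greater than $0$, one has $C_S(P) \cap R = K$.
   Context: Standing conventions: $K$ is a field, $R = K[y]$, $\sigma$ is a $K$-algebra endomorphism of $R$ with $\deg_y(\sigma(y)) > 1$, and $\delta$ is a $K$-linear $\sigma$-derivation of $R$, i.e. $\delta(ab) = \sigma(a)\delta(b) + \delta(a)b$. $S = R[x;\sigma,\delta]$ is the Ore extension (polynomials $\sum r_i x^i$, $r_i\in R$, with $xr = \sigma(r)x + \delta(r)$). Degree means degree in $x$. $C_S(P)$ is the centralizer of $P$ in $S$. *)

From HB Require Import structures.
From mathcomp Require Import all_boot all_order all_algebra.
Set Implicit Arguments. Unset Strict Implicit. Unset Printing Implicit Defensive.
Import GRing.Theory.
Local Open Scope ring_scope.

(* Ore extension S = R[x; sigma, delta] with R = {poly K} (variable y).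
   An element sum_i r_i x^i (coefficients on the LEFT) is represented by the
   polynomial P : {poly {poly K}} with P`_i = r_i (the outer variable is x).
   Addition is that of {poly {poly K}}; multiplication is the Ore product
   determined by x r = sigma(r) x + delta(r). *)

(* left multiplication by x:  x * (sum c_k x^k) = sum (sigma c_k x^(k+1) + delta c_k x^k) *)
Definition ore_xmul (K : fieldType) (sigma delta : {poly K} -> {poly K})
  (q : {poly {poly K}}) : {poly {poly K}} :=
  'X * map_poly sigma q + map_poly delta q.

(* Ore product: (sum a_i x^i) * Q = sum a_i (x^i Q) *)
Definition ore_mul (K : fieldType) (sigma delta : {poly K} -> {poly K})
  (p q : {poly {poly K}}) : {poly {poly K}} :=
  \sum_(i < size p) (p`_i)%:P * iter i (ore_xmul sigma delta) q.

Definition ore_centralizer (K : fieldType) (sigma delta : {poly K} -> {poly K})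
  (P : {poly {poly K}}) : {poly {poly K}} -> Prop :=
  fun Q => ore_mul sigma delta Q P = ore_mul sigma delta P Q.

From HB Require Import structures.
From mathcomp Require Import all_boot all_order all_algebra.
Set Implicit Arguments. Unset Strict Implicit. Unset Printing Implicit Defensive.
Import GRing.Theory.
Local Open Scope ring_scope.

(* Constants commuting with an element of positive degree in an Ore extension
   S = R[x; sigma, delta], R = K[y], deg_y sigma(y) = d > 1.

   Write P = sum_(i <= n) P_i x^i with n > 0 and P_n <> 0, and let r be in R.
   Since r has x-degree 0, r P = sum r P_i x^i.  On the other hand x^i r has
   x-degree at most i and x^i-coefficient sigma^i(r), so the x^n-coefficient
   of P r is P_n sigma^n(r).  Hence if r commutes with P then r = sigma^n(r).
   As sigma is the substitution y |-> sigma(y), it multiplies y-degrees by d,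
   so deg r = d^n deg r with d^n > 1, forcing deg r = 0, i.e. r is in K.
   Conversely, scalars c are fixed by sigma and killed by delta, so x^i c =
   c x^i and c commutes with everything. *)

Lemma additive_map0 (U V : zmodType) (f : U -> V) :
  (forall a b, f (a + b) = f a + f b) -> f 0 = 0.
Proof.
by move=> f_add; apply: (addrI (f 0)); rewrite -f_add !addr0.
Qed.

Section OreConstants.

Variables (K : fieldType) (sigma delta : {poly K} -> {poly K}).

Hypothesis sigma_add : forall a b, sigma (a + b) = sigma a + sigma b.
Hypothesis sigma_mul : forall a b, sigma (a * b) = sigma a * sigma b.
Hypothesis sigma_one : sigma 1 = 1.
Hypothesis sigma_lin : forall (c : K) a, sigma (c *: a) = c *: sigma a.
Hypothesis delta_add : forall a b, delta (a + b) = delta a + delta b.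
Hypothesis delta_lin : forall (c : K) a, delta (c *: a) = c *: delta a.
Hypothesis delta_der : forall a b, delta (a * b) = sigma a * delta b + delta a * b.

Local Notation xmul := (ore_xmul sigma delta).

Let sigma0 : sigma 0 = 0. Proof. exact: additive_map0. Qed.
Let delta0 : delta 0 = 0. Proof. exact: additive_map0. Qed.

(* sigma is a K-algebra map, hence fixes the scalars. *)
Lemma sigmaC (c : K) : sigma c%:P = c%:P.
Proof. by rewrite -alg_polyC sigma_lin sigma_one. Qed.

(* A sigma-derivation kills 1 (from delta(1*1)), hence all scalars. *)
Lemma deltaC (c : K) : delta c%:P = 0.
Proof.
have delta1 : delta 1 = 0.
  have := delta_der 1 1; rewrite mulr1 sigma_one mul1r mulr1 => twice.
  by apply: (addrI (delta 1)); rewrite addr0 -twice.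
by rewrite -alg_polyC delta_lin delta1 scaler0.
Qed.

Lemma sigma_comp (p : {poly K}) : sigma p = p \Po sigma 'X.
Proof.
elim/poly_ind: p => [|p c IH]; first by rewrite sigma0 comp_poly0.
by rewrite sigma_add sigma_mul IH comp_poly_MXaddC sigmaC.
Qed.

Lemma degree_sigma_iter (n : nat) (p : {poly K}) :
  (size (iter n sigma p)).-1 = ((size p).-1 * (size (sigma 'X)).-1 ^ n)%N.
Proof.
elim: n p => [|n IH] p; first by rewrite muln1.
by rewrite iterS sigma_comp size_comp_poly IH expnSr mulnA.
Qed.

Lemma sigma_iter_fixed_scalar (n : nat) (r : {poly K}) :
  (1 < (size (sigma 'X)).-1)%N -> (0 < n)%N -> iter n sigma r = r ->
  exists c : K, r = c%:P.
Proof.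
move=> d_gt1 n_gt0 fix_r; exists r`_0; apply: size1_polyC.
have deg_r0 : (size r).-1 = 0%N.
  have := degree_sigma_iter n r; rewrite fix_r.
  case: (size r).-1 => [//|m] /eqP; rewrite -{1}[m.+1]muln1 eqn_pmul2l //.
  by rewrite -(expn0 (size (sigma 'X)).-1) eqn_exp2l // eq_sym eqn0Ngt n_gt0.
by case: (size r) deg_r0 => [|[|]].
Qed.

Lemma coef_ore_xmul (q : {poly {poly K}}) (j : nat) :
  (xmul q)`_j = (if j == 0%N then 0 else sigma q`_j.-1) + delta q`_j.
Proof.
by rewrite /ore_xmul coefD coefXM !coef_map_id0 //; case: eqP.
Qed.

Lemma coef_ore_xmul_iter_const (i j : nat) (r : {poly K}) : (i <= j)%N ->
  (iter i xmul r%:P)`_j = if j == i then iter i sigma r else 0.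
Proof.
elim: i j => [|i IH] [|j] //= le_ij; rewrite ?coefC //.
rewrite coef_ore_xmul /= IH // [in delta _]IH 1?ltnW //.
by rewrite (gtn_eqF le_ij) delta0 addr0 eqSS; case: eqP; rewrite ?sigma0.
Qed.

Lemma ore_mul_constl (r : {poly K}) (Q : {poly {poly K}}) :
  ore_mul sigma delta r%:P Q = r%:P * Q.
Proof.
rewrite /ore_mul size_polyC; have [->|_] := eqVneq r 0.
  by rewrite big_ord0 mul0r.
by rewrite big_ord1 coefC.
Qed.

Lemma coef_ore_mul_constr (P : {poly {poly K}}) (n : nat) (r : {poly K}) :
  size P = n.+1 -> (ore_mul sigma delta P r%:P)`_n = P`_n * iter n sigma r.
Proof.
move=> size_P; rewrite /ore_mul coef_sum size_P big_ord_recr /=.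
rewrite big1 ?add0r => [|i _]; last first.
  by rewrite coefCM coef_ore_xmul_iter_const ?gtn_eqF ?mulr0 // ltnW.
by rewrite coefCM coef_ore_xmul_iter_const // eqxx.
Qed.

(* Scalars commute with x, hence x^i c = c x^i. *)
Lemma ore_xmul_iter_scalar (i : nat) (c : K) :
  iter i xmul c%:P%:P = c%:P%:P * 'X^i.
Proof.
elim: i => [|i IH]; first by rewrite mulr1.
apply/polyP => j; rewrite iterS IH coef_ore_xmul !coefCM !coefXn.
have coef_eq : forall b : bool, c%:P * b%:R = if b then c%:P else 0.
  by case; rewrite ?mulr1 ?mulr0.
rewrite !coef_eq; case: (j =P i) => _; rewrite ?deltaC ?delta0 addr0;
  by case: j => [|j] //=; rewrite eqSS; case: eqP; rewrite ?sigmaC ?sigma0.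
Qed.

Lemma ore_mul_scalarr (P : {poly {poly K}}) (c : K) :
  ore_mul sigma delta P c%:P%:P = P * c%:P%:P.
Proof.
rewrite /ore_mul; under eq_bigr => i _ do rewrite ore_xmul_iter_scalar mulrCA.
rewrite -mulr_sumr mulrC; congr (_ * _).
by rewrite -[RHS]coefK poly_def; apply: eq_bigr => i _; rewrite mul_polyC.
Qed.

End OreConstants.

Theorem lemma2p2 (K : fieldType) (sigma delta : {poly K} -> {poly K})
  (sigma_add : forall a b, sigma (a + b) = sigma a + sigma b)
  (sigma_mul : forall a b, sigma (a * b) = sigma a * sigma b)
  (sigma_one : sigma 1 = 1)
  (sigma_lin : forall (c : K) a, sigma (c *: a) = c *: sigma a)
  (sigma_deg : (1 < (size (sigma 'X)).-1)%N)
  (delta_add : forall a b, delta (a + b) = delta a + delta b)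
  (delta_lin : forall (c : K) a, delta (c *: a) = c *: delta a)
  (delta_der : forall a b, delta (a * b) = sigma a * delta b + delta a * b)
  (P : {poly {poly K}}) (hP : (0 < (size P).-1)%N) :
  forall r : {poly K},
    ore_centralizer sigma delta P (r%:P) <-> exists c : K, r = c%:P.
Proof.
move=> r; rewrite /ore_centralizer; split => [comm_rP | [c ->]]; last first.
  by rewrite ore_mul_constl ore_mul_scalarr // mulrC.
set n := (size P).-1 in hP.
have size_P : size P = n.+1 by rewrite prednK // (leq_trans hP (leq_pred _)).
have lead_P : P`_n != 0.
  by rewrite -[n]/(size P).-1 -lead_coefE lead_coef_eq0 -size_poly_eq0 size_P.
have := congr1 (fun q : {poly {poly K}} => q`_n) comm_rP.
rewrite /= ore_mul_constl coefCM coef_ore_mul_constr // [P`_n * _]mulrC.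
move=> /(mulIf lead_P)/esym fix_r.
exact: (sigma_iter_fixed_scalar sigma_add sigma_mul sigma_one sigma_lin
          sigma_deg hP fix_r).
Qed.
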